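(* Let $G$ and $H$ be finite simple graphs, neither complete, and not both equal to a disjoint union of two complete graphs. Then $d_{G\diamond H}((g,h),(g',h'))=3$ if and only if at least one of the following holds: (1) $N_G[g]=N_G[g']$, $d_H(h,h')\ge 3$, and ($N_G[g]=V(G)$ or $\{h,h'\}$ is a $\gamma_H$-pair); (2) $N_H[h]=N_H[h']$, $d_G(g,g')\ge 3$, and ($N_H[h]=V(H)$ or $\{g,g'\}$ is a $\gamma_G$-pair).
   Context: The modular product $G\diamond H$ has vertex set $V(G)\times V(H)$; distinct vertices $(g,h)$ and $(g',h')$ are adjacent iff ($g=g'$ and $hh'\in E(H)$), or ($gg'\in E(G)$ and $h=h'$), or ($gg'\in E(G)$ and $hh'\in E(H)$), or ($g\neq g'$, $h\neq h'$, $gg'\notin E(G)$ and $hh'\notin E(H)$). $N_X[v]$ is the closed neighborhood; distances may be $\infty$ (written $\ge 3$ includes $\infty$). A $\gamma_G$-pair is a set $\{g,g'\}$ of two distinct vertices of $G$ such that $N_G[g]\cap N_G[g']=\emptyset$ and $N_G[g]\cup N_G[g']=V(G)$. *)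

From mathcomp Require Import all_boot.
Set Implicit Arguments. Unset Strict Implicit. Unset Printing Implicit Defensive.

Definition simple_graph (T : finType) (e : rel T) : Prop :=
  symmetric e /\ irreflexive e.

Definition cnbhd (T : finType) (e : rel T) (v : T) : {set T} :=
  [set x | (x == v) || e v x].

Definition complete (T : finType) (e : rel T) : Prop :=
  forall x y : T, x != y -> e x y.

Definition two_cliques (T : finType) (e : rel T) : Prop :=
  exists A : {set T}, A != set0 /\ ~: A != set0 /\
    forall x y : T, x != y -> (e x y <-> ((x \in A) = (y \in A))).

Definition walk (T : finType) (e : rel T) (x y : T) (n : nat) : Prop :=
  exists p : seq T, size p = n /\ path e x p /\ last x p = y.

(* d(x,y) = k  (distance is the least length of a walk; infinite if none) *)
Definition dist_eq (T : finType) (e : rel T) (x y : T) (k : nat) : Prop :=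
  walk e x y k /\ forall n, n < k -> ~ walk e x y n.

(* d(x,y) >= k  (includes d = infinity) *)
Definition dist_ge (T : finType) (e : rel T) (x y : T) (k : nat) : Prop :=
  forall n, n < k -> ~ walk e x y n.

Definition gamma_pair (T : finType) (e : rel T) (g g' : T) : Prop :=
  g != g' /\ cnbhd e g :&: cnbhd e g' = set0 /\ cnbhd e g :|: cnbhd e g' = setT.

Definition modprod (T1 T2 : finType) (e1 : rel T1) (e2 : rel T2) : rel (T1 * T2) :=
  fun u v =>
    let: (g, h) := u in let: (g', h') := v in
    (u != v) &&
    [|| (g == g') && e2 h h',
        e1 g g' && (h == h'),
        e1 g g' && e2 h h'
      | [&& g != g', h != h', ~~ e1 g g' & ~~ e2 h h'] ].

(* The closed neighbourhood of (g,h) in the modular product is the set of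
   pairs (x,y) with x in N[g] iff y in N[h], and d >= 3 amounts to disjoint
   closed neighbourhoods.  So d((g,h),(g',h')) >= 3 says that no pair (x,y)
   matches both endpoints; the pair (g,h) itself forces exactly one of
   g in N[g'], h in N[h'], and testing the other pairs gives (1) or (2).
   Conversely, under (1) a walk of length 3 is built from any pair x, y
   violating "x, y are adjacent iff both or neither lie in N[g]".  If no such
   pair exists, G (not complete) is the union of the cliques N[g] and its
   complement; then {h,h'} is a gamma-pair and the same search inside N[h]
   succeeds, because H is not also a union of two cliques. *)

From mathcomp Require Import all_boot.

Set Implicit Arguments. Unset Strict Implicit. Unset Printing Implicit Defensive.

Section Walks.

Variables (T : finType) (e : rel T).

Lemma in_cnbhd x y : (y \in cnbhd e x) = (y == x) || e x y.
Proof. by rewrite inE. Qed.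

Lemma cnbhd_refl x : x \in cnbhd e x.
Proof. by rewrite in_cnbhd eqxx. Qed.

Lemma walk0 x y : walk e x y 0 <-> x = y.
Proof. by split=> [[p [/size0nil -> [_ <-]]] | ->]; last exists [::]. Qed.

Lemma walk1 x y : walk e x y 1 <-> e x y.
Proof.
split=> [[p [sz [pth <-]]] | xy]; last by exists [:: y]; rewrite /= xy.
by case: p sz pth => [|z [|? ?]] //= _ /andP[].
Qed.

Lemma walk2 x y : walk e x y 2 <-> exists2 z, e x z & e z y.
Proof.
split=> [[p [sz [pth <-]]] | [z xz zy]]; last by exists [:: z; y]; rewrite /= xz zy.
by case: p sz pth => [|z [|t [|? ?]]] //= _ /and3P[xz zt _]; exists z.
Qed.

Lemma walk3 x a b y : e x a -> e a b -> e b y -> walk e x y 3.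
Proof. by move=> xa ab b_y; exists [:: a; b; y]; rewrite /= xa ab b_y. Qed.

Hypothesis e_sym : symmetric e.

Lemma cnbhdC x y : (y \in cnbhd e x) = (x \in cnbhd e y).
Proof. by rewrite !in_cnbhd eq_sym e_sym. Qed.

Lemma dist_ge3E x y : dist_ge e x y 3 <-> cnbhd e x :&: cnbhd e y = set0.
Proof.
split=> [far | disj].
  apply/setP => z; rewrite in_setI in_set0 !in_cnbhd.
  apply/negbTE/andP => -[/orP[/eqP-> | xz] /orP[/eqP zy | yz]].
  - by apply: (far 0) => //; apply/walk0.
  - by apply: (far 1) => //; apply/walk1; rewrite e_sym.
  - by apply: (far 1) => //; apply/walk1; rewrite -zy.
  - by apply: (far 2) => //; apply/walk2; exists z; rewrite // e_sym.
have common z : z \in cnbhd e x -> z \in cnbhd e y -> False.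
  by move=> xz yz; have := in_set0 z; rewrite -disj in_setI xz yz.
case=> [_ /walk0 xy | [_ /walk1 xy | [_ /walk2 [z xz zy] | //]]].
- by apply: (common y); rewrite ?xy cnbhd_refl.
- by apply: (common y); rewrite ?cnbhd_refl // in_cnbhd xy orbT.
- by apply: (common z); rewrite in_cnbhd ?xz ?(e_sym y) ?zy orbT.
Qed.

Lemma walk3_cnbhd x a b y :
  dist_ge e x y 3 -> a \in cnbhd e x -> b \in cnbhd e a -> y \in cnbhd e b ->
  walk e x y 3.
Proof.
move=> /dist_ge3E disj xa ab b_y.
have common z : z \in cnbhd e x -> z \in cnbhd e y -> walk e x y 3.
  by move=> xz yz; have := in_set0 z; rewrite -disj in_setI xz yz.
have [ax|ax] := eqVneq a x; first by apply: (common b); rewrite -?ax // cnbhdC.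
have [ba|ba] := eqVneq b a; first by apply: (common a); rewrite // cnbhdC -ba.
have [yb|yb] := eqVneq y b; first by apply: (common a); rewrite // cnbhdC yb.
move: xa ab b_y; rewrite !in_cnbhd (negbTE ax) (negbTE ba) (negbTE yb).
exact: walk3.
Qed.

End Walks.

Lemma homo_walk (T T' : finType) (e : rel T) (e' : rel T') (f : T -> T') x y n :
  {homo f : u v / e u v >-> e' u v} -> walk e x y n -> walk e' (f x) (f y) n.
Proof.
move=> fe [p [<- [ep <-]]]; exists (map f p).
by rewrite size_map last_map (homo_path fe).
Qed.

Lemma cnbhd_cut_or_defect (T : finType) (e : rel T) (A : {set T}) :
  (forall x y, (y \in cnbhd e x) = ((x \in A) == (y \in A))) \/
  (exists x y, (y \in cnbhd e x) != ((x \in A) == (y \in A))).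
Proof.
case: (pickP [pred p : T * T | (p.2 \in cnbhd e p.1) != ((p.1 \in A) == (p.2 \in A))]).
  by move=> [x y] xy; right; exists x, y.
by move=> cut; left=> x y; have /negbFE/eqP := cut (x, y).
Qed.

Lemma two_cliques_of_cut (T : finType) (e : rel T) (A : {set T}) a b :
  a \in A -> b \notin A ->
  (forall x y, (y \in cnbhd e x) = ((x \in A) == (y \in A))) -> two_cliques e.
Proof.
move=> aA bA cut; exists A; split; first by apply/set0Pn; exists a.
split=> [|x y xy]; first by apply/set0Pn; exists b; rewrite in_setC.
by have := cut x y; rewrite in_cnbhd eq_sym (negbTE xy) /= => ->; split=> /eqP.
Qed.

Lemma modprodC (T1 T2 : finType) (e1 : rel T1) (e2 : rel T2) u v :
  modprod e2 e1 (u.2, u.1) (v.2, v.1) = modprod e1 e2 u v.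
Proof.
case: u v => [g h] [g' h']; rewrite /modprod !xpair_eqE [(h == h') && _]andbC.
by case: (g == g'); case: (h == h'); case: (e1 g g'); case: (e2 h h').
Qed.

Lemma dist_eq_modprodC (T1 T2 : finType) (e1 : rel T1) (e2 : rel T2) u v k :
  dist_eq (modprod e1 e2) u v k -> dist_eq (modprod e2 e1) (u.2, u.1) (v.2, v.1) k.
Proof.
move=> [uv_k far]; split=> [|n lt_nk vu_n].
  by apply: (homo_walk (f := fun w => (w.2, w.1))) uv_k => a b; rewrite modprodC.
apply: (far n lt_nk); case: u v {uv_k far} vu_n => [g h] [g' h'] vu_n.
by apply: (homo_walk (f := fun w => (w.2, w.1))) vu_n => a b; rewrite modprodC.
Qed.

Definition twin_far (T1 T2 : finType) (e1 : rel T1) (e2 : rel T2) g g' h h' : Prop :=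
  cnbhd e1 g = cnbhd e1 g' /\ dist_ge e2 h h' 3 /\
  (cnbhd e1 g = setT \/ gamma_pair e2 h h').

Section ModularProduct.

Variables (T1 T2 : finType) (e1 : rel T1) (e2 : rel T2).
Hypotheses (sG : simple_graph e1) (sH : simple_graph e2).

Let e1_sym : symmetric e1 := sG.1.
Let e2_sym : symmetric e2 := sH.1.

Lemma modprod_sym : symmetric (modprod e1 e2).
Proof.
by case=> g h [g' h']; rewrite /modprod eq_sym (eq_sym g) (eq_sym h) e1_sym e2_sym.
Qed.

Lemma in_cnbhd_modprod g h x y :
  ((x, y) \in cnbhd (modprod e1 e2) (g, h)) =
  ((x \in cnbhd e1 g) == (y \in cnbhd e2 h)).
Proof.
rewrite !in_cnbhd /modprod !xpair_eqE.
case: (eqVneq x g) => [->|xg]; case: (eqVneq y h) => [->|yh];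
  rewrite /= ?sG.2 ?sH.2 ?eqxx //=; by case: (e1 g x); case: (e2 h y).
Qed.

Lemma dist_ge3_modprod g g' h h' :
  dist_ge (modprod e1 e2) (g, h) (g', h') 3 <->
  forall x y, (x \in cnbhd e1 g) == (y \in cnbhd e2 h) ->
              (x \in cnbhd e1 g') != (y \in cnbhd e2 h').
Proof.
split=> [/(dist_ge3E modprod_sym) disj x y xy | far].
  apply: contraFN (in_set0 (x, y)) => x'y'.
  by rewrite -disj in_setI !in_cnbhd_modprod xy x'y'.
apply/(dist_ge3E modprod_sym)/setP => -[x y]; rewrite in_setI !in_cnbhd_modprod in_set0.
by case xy: (_ == _) => //=; apply/negbTE/far.
Qed.


Lemma dist_ge3_modprod_cnbhd g g' h h' :
  dist_ge (modprod e1 e2) (g, h) (g', h') 3 ->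
  (g \in cnbhd e1 g') = (h \notin cnbhd e2 h').
Proof.
move/dist_ge3_modprod/(_ g h); rewrite !cnbhd_refl => /(_ isT).
by case: (g \in _); case: (h \in _).
Qed.

Lemma twin_far_of_dist_ge3 g g' h h' :
  g \in cnbhd e1 g' -> dist_ge (modprod e1 e2) (g, h) (g', h') 3 ->
  twin_far e1 e2 g g' h h'.
Proof.
move=> gg' /dist_ge3_modprod far.
have h'h : h \in cnbhd e2 h' = false.
  by have := far g h; rewrite !cnbhd_refl gg' => /(_ isT); case: (h \in _).
have hh' : h' \in cnbhd e2 h = false by rewrite (cnbhdC e2_sym) h'h.
have Ng : cnbhd e1 g = cnbhd e1 g'.
  apply/setP => x; apply/idP/idP => [xg | xg'].
    by have := far x h; rewrite xg cnbhd_refl h'h eqbF_neg negbK => /(_ isT).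
  apply: contraTT xg' => xg; have := far x h'.
  by rewrite (negbTE xg) hh' cnbhd_refl eqb_id => /(_ isT).
have disj : cnbhd e2 h :&: cnbhd e2 h' = set0.
  apply/setP => y; rewrite in_setI in_set0; apply/negbTE/andP => -[hy h'y].
  by have := far g y; rewrite cnbhd_refl hy gg' h'y => /(_ isT).
split=> //; split; first exact/(dist_ge3E e2_sym).
case: (pickP [pred x | x \notin cnbhd e1 g]) => [x0 /= x0g | allin]; last first.
  by left; apply/setP => x; rewrite in_setT; apply/negbFE/allin.
right; split; first by apply: contraFN hh' => /eqP <-; apply: cnbhd_refl.
split=> //; apply/setP => y; rewrite in_setU in_setT.
apply/negPn/negP => /norP[hy h'y].
by have := far x0 y; rewrite -Ng (negbTE x0g) (negbTE hy) (negbTE h'y) => /(_ isT).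
Qed.

Lemma dist_ge3_of_twin_far g g' h h' :
  twin_far e1 e2 g g' h h' -> dist_ge (modprod e1 e2) (g, h) (g', h') 3.
Proof.
move=> [Ng [/(dist_ge3E e2_sym) disj universal_or_gamma]].
apply/dist_ge3_modprod => x y.
rewrite -Ng; case xg: (x \in cnbhd e1 g) => /eqP/esym hy.
  by have := in_set0 y; rewrite -disj in_setI hy /= => ->.
case: universal_or_gamma => [gT | [_ [_ cover]]]; first by rewrite gT in_setT in xg.
by have := in_setT y; rewrite -cover in_setU hy /= => ->.
Qed.

Lemma modprod_walk3_twin g g' h h' x y :
  cnbhd e1 g = cnbhd e1 g' -> h' \in cnbhd e2 h = false ->
  (y \in cnbhd e1 x) != ((x \in cnbhd e1 g) == (y \in cnbhd e1 g)) ->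
  dist_ge (modprod e1 e2) (g, h) (g', h') 3 ->
  walk (modprod e1 e2) (g, h) (g', h') 3.
Proof.
move=> Ng hh' defect far.
have h'h : h \in cnbhd e2 h' = false by rewrite (cnbhdC e2_sym) hh'.
(* Letting the second coordinates follow membership in N[g] makes the outer
   steps closed adjacencies; the defect is exactly what the middle step needs. *)
apply: (walk3_cnbhd modprod_sym far
  (a := (x, if x \in cnbhd e1 g then h else h'))
  (b := (y, if y \in cnbhd e1 g then h' else h))); rewrite !in_cnbhd_modprod.
- by case: (x \in cnbhd e1 g); rewrite ?cnbhd_refl ?hh'.
- move: defect; case: (x \in cnbhd e1 g); case: (y \in cnbhd e1 g);
    rewrite /= ?cnbhd_refl ?hh' ?h'h; by case: (y \in cnbhd e1 x).
- by rewrite (cnbhdC e1_sym) -Ng; case: (y \in cnbhd e1 g); rewrite ?cnbhd_refl ?hh'.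
Qed.

Lemma modprod_walk3_gamma g g' h h' x0 y1 y2 :
  cnbhd e1 g = cnbhd e1 g' -> x0 \in cnbhd e1 g = false ->
  (forall y, (y \in cnbhd e2 h') = (y \notin cnbhd e2 h)) ->
  (y2 \in cnbhd e2 y1) != ((y1 \in cnbhd e2 h) == (y2 \in cnbhd e2 h)) ->
  dist_ge (modprod e1 e2) (g, h) (g', h') 3 ->
  walk (modprod e1 e2) (g, h) (g', h') 3.
Proof.
move=> Ng gx0 opp defect far.
have g'g : g' \in cnbhd e1 g by rewrite Ng cnbhd_refl.
have g'x0 : g' \in cnbhd e1 x0 = false by rewrite (cnbhdC e1_sym) -Ng gx0.
apply: (walk3_cnbhd modprod_sym far
  (a := (if y1 \in cnbhd e2 h then g else x0, y1))
  (b := (if y2 \in cnbhd e2 h then x0 else g', y2))); rewrite !in_cnbhd_modprod.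
- by case: (y1 \in cnbhd e2 h); rewrite ?cnbhd_refl ?gx0.
- move: defect; case: (y1 \in cnbhd e2 h); case: (y2 \in cnbhd e2 h);
    rewrite /= ?cnbhd_refl ?gx0 ?g'g ?g'x0; by case: (y2 \in cnbhd e2 y1).
- by rewrite (cnbhdC e2_sym y2) opp; case: (y2 \in cnbhd e2 h); rewrite ?cnbhd_refl ?g'x0.
Qed.

Lemma walk3_of_twin_far g g' h h' :
  ~ complete e1 -> ~ (two_cliques e1 /\ two_cliques e2) ->
  twin_far e1 e2 g g' h h' -> walk (modprod e1 e2) (g, h) (g', h') 3.
Proof.
move=> ncG not_both tf; have far := dist_ge3_of_twin_far tf.
case: tf => Ng [/(dist_ge3E e2_sym) disj universal_or_gamma].
have hh' : h' \in cnbhd e2 h = false.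
  by have := in_set0 h'; rewrite -disj in_setI cnbhd_refl andbT.
have [cutG | [x [y defect]]] := cnbhd_cut_or_defect e1 (cnbhd e1 g); last first.
  exact: modprod_walk3_twin Ng hh' defect far.
case: (pickP [pred x | x \notin cnbhd e1 g]) => [x0 /= /negbTE gx0 | allin]; last first.
  case: ncG => x y xy; have := cutG x y; rewrite !(negbFE (allin _)) in_cnbhd.
  by rewrite eq_sym (negbTE xy).
have opp y : (y \in cnbhd e2 h') = (y \notin cnbhd e2 h).
  case: universal_or_gamma => [gT | [_ [_ cover]]]; first by rewrite gT in_setT in gx0.
  have := in_setT y; rewrite -cover in_setU.
  have := in_set0 y; rewrite -disj in_setI.
  by case: (y \in cnbhd e2 h); case: (y \in cnbhd e2 h').
have [cutH | [y1 [y2 defect]]] := cnbhd_cut_or_defect e2 (cnbhd e2 h); last first.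
  exact: modprod_walk3_gamma Ng gx0 opp defect far.
case: not_both; split.
- exact: two_cliques_of_cut (cnbhd_refl e1 g) (negbT gx0) cutG.
- exact: two_cliques_of_cut (cnbhd_refl e2 h) (negbT hh') cutH.
Qed.

Lemma dist3_of_twin_far g g' h h' :
  ~ complete e1 -> ~ (two_cliques e1 /\ two_cliques e2) ->
  twin_far e1 e2 g g' h h' -> dist_eq (modprod e1 e2) (g, h) (g', h') 3.
Proof.
move=> ncG not_both tf.
by split; [apply: walk3_of_twin_far | apply: dist_ge3_of_twin_far].
Qed.

End ModularProduct.

Theorem mainTheorem4 (T1 T2 : finType) (e1 : rel T1) (e2 : rel T2)
    (sG : simple_graph e1) (sH : simple_graph e2)
    (ncG : ~ complete e1) (ncH : ~ complete e2)
    (not_both : ~ (two_cliques e1 /\ two_cliques e2))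
    (g g' : T1) (h h' : T2) :
  dist_eq (modprod e1 e2) (g, h) (g', h') 3 <->
  ( (cnbhd e1 g = cnbhd e1 g' /\ dist_ge e2 h h' 3 /\
       (cnbhd e1 g = setT \/ gamma_pair e2 h h'))
    \/
    (cnbhd e2 h = cnbhd e2 h' /\ dist_ge e1 g g' 3 /\
       (cnbhd e2 h = setT \/ gamma_pair e1 g g')) ).
Proof.
have not_both' : ~ (two_cliques e2 /\ two_cliques e1) by case=> ? ?; apply: not_both.
split=> [d3 | [tf | tf]].
- case: (boolP (g \in cnbhd e1 g')) => gg'.
    by left; apply: twin_far_of_dist_ge3 d3.2.
  right; apply: (twin_far_of_dist_ge3 sH sG _ (dist_eq_modprodC d3).2).
  by move: gg'; rewrite (dist_ge3_modprod_cnbhd sG sH d3.2) negbK.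
- by apply: (dist3_of_twin_far sG sH ncG not_both).
- exact: (dist_eq_modprodC (dist3_of_twin_far sH sG ncH not_both' tf)).
Qed.
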